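(* Let $K$ be a perfect field, $L/K$ a finite extension, and let $L_1,\dots,L_s$ ($s=s_K(L)$) be the distinct subfields of $\bar K$ isomorphic to $L$ over $K$. Suppose there is a permutation $(i_1,\dots,i_s)$ of $(1,\dots,s)$ such that the tower $K\subseteq L_{i_1}\subseteq L_{i_1}L_{i_2}\subseteq\cdots\subseteq L_{i_1}\cdots L_{i_s}=\tilde L$ consists of $s+1$ distinct fields. Then for each integer $0\le a\le s$ there exists a finite extension $M/K$ with $\rho_K(M,L)=a\cdot r_K(L)$.
   Context: $\bar K$ is a fixed algebraic closure; $\tilde L$ is the Galois closure of $L/K$ in $\bar K$, $G=\mathrm{Gal}(\tilde L/K)$, $H=\mathrm{Gal}(\tilde L/L)$, $s_K(L)=[G:N_G(H)]$, and $r_K(L)=[N_G(H):H]$ (the number of roots of the minimal polynomial $f$ of a primitive element of $L/K$ lying in $L$). For a finite extension $M/K$, $\rho_K(M,L)$ is the number of roots of $f$ lying in $M$. *)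

From HB Require Import structures.
From mathcomp Require Import all_boot all_order all_algebra all_fingroup all_solvable all_field.
Set Implicit Arguments. Unset Strict Implicit. Unset Printing Implicit Defensive.
Import GRing.Theory.
Local Open Scope ring_scope.

Definition perfect_field (F : fieldType) : Prop :=
  [pchar F] =i pred0 \/
  forall p, p \in [pchar F] -> forall x : F, exists y : F, y ^+ p = x.

(* The base field K is 1%VS inside the ambient extension E (standing for Kbar). *)

Definition K_conjugate (F : fieldType) (E : splittingFieldType F)
    (L L' : {subfield E}) : Prop :=
  exists f : 'End(E), kHom 1%VS L f /\ (f @: L)%VS = L'.

Definition galois_closure_of (F : fieldType) (E : splittingFieldType F)
    (L Lt : {subfield E}) : Prop :=
  [/\ (L <= Lt)%VS, galois 1%VS Lt &
      forall M : {subfield E}, (L <= M)%VS -> galois 1%VS M -> (Lt <= M)%VS].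

Definition r_K (F : fieldType) (E : splittingFieldType F)
    (L Lt : {subfield E}) : nat :=
  (#|'N_('Gal(Lt / 1%VS))('Gal(Lt / L)) : 'Gal(Lt / L)|)%g.

(* rho_K(M,L) = n : the minimal polynomial f of x over K has exactly n
   distinct roots lying in M. *)
Definition rho_is (F : fieldType) (E : splittingFieldType F)
    (M : {subfield E}) (x : E) (n : nat) : Prop :=
  exists rs : seq E,
    [/\ uniq rs, size rs = n,
        forall y, y \in rs -> (y \in M) && root (minPoly 1%VS x) y &
        forall y, y \in M -> root (minPoly 1%VS x) y -> y \in rs].

Definition tower (F : fieldType) (E : splittingFieldType F)
    (Ls : seq {subfield E}) : seq {vspace E} :=
  [seq \big[@prodv _ _/1%VS]_(i <- take k Ls) (i : {vspace E})
     | k <- iota 0 (size Ls).+1].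

From HB Require Import structures.
From mathcomp Require Import all_boot all_order all_algebra all_fingroup all_solvable all_field.
Set Implicit Arguments. Unset Strict Implicit. Unset Printing Implicit Defensive.
Import GRing.Theory.
Local Open Scope ring_scope.

(* Let G = Gal(Lt/K), H = Gal(Lt/L) and N = N_G(H). The roots of the minimal
   polynomial of x form the orbit G x, each root being the image of x under
   exactly one right coset of H. The roots lying in a conjugate g L are the h x
   with h in N g, so every conjugate of L contains |N : H| = r_K(L) roots, and a
   root y lies in the conjugate L_j exactly when K(y) = L_j. As the tower is
   strictly increasing, L_j lies in the compositum of the first k conjugates iff
   j < k, so that compositum contains exactly k r_K(L) roots. *)

Lemma count_undup_uniform (T : eqType) (r : seq T) (P : pred T) n :
  {in r, forall y, count_mem y r = n} -> (count P (undup r) * n = count P r)%N.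
Proof.
move=> count_r; rewrite -[RHS]sum1_count -big_undup_iterop_count.
rewrite big_seq_cond (eq_bigr (fun=> n)) -?big_seq_cond => [|y /andP[ry _]].
  by rewrite big_const_seq iter_addn_0 mulnC.
by rewrite Monoid.iteropE iter_addn_0 mul1n count_r // -mem_undup.
Qed.

Lemma count_ltnS (T : Type) (f : T -> nat) (s : seq T) k :
  count (fun y => f y < k.+1)%N s =
    (count (fun y => f y < k)%N s + count (fun y => f y == k) s)%N.
Proof.
rewrite -count_predUI (@eq_count _ (predI _ _) pred0) ?count_pred0 ?addn0.
  by apply: eq_count => y /=; rewrite ltnS leq_eqVlt orbC.
by move=> y /=; case: ltngtP.
Qed.

Lemma count_codom (T : finType) (U : eqType) (f : T -> U) (P : pred U) :
  count P (codom f) = #|[set t | P (f t)]|.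
Proof.
rewrite cardE /enum_mem size_filter codomE count_map enumT.
by apply: eq_count => t; rewrite /= inE.
Qed.

Section Composita.

Variables (F : fieldType) (E : splittingFieldType F).
Implicit Types (K : {subfield E}) (Ks : seq {subfield E}).

Definition compositum (Ks : seq {subfield E}) : {subfield E} :=
  foldr (fun K C => (K * C)%AS) 1%AS Ks.

Lemma compositumE Ks :
  (compositum Ks : {vspace E}) = \big[@prodv _ _/1%VS]_(K <- Ks) (K : {vspace E}).
Proof. by elim: Ks => [|K Ks IH]; rewrite ?big_nil ?big_cons //= -IH. Qed.

Lemma compositum_rcons Ks K :
  (compositum (rcons Ks K) : {vspace E}) = (compositum Ks * K)%VS.
Proof. by rewrite !compositumE big_rcons. Qed.

Lemma sub_compositum Ks K : K \in Ks -> (K <= compositum Ks)%VS.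
Proof.
elim: Ks => [|K' Ks IH] //=; rewrite inE => /predU1P[-> | /IH sKC].
  exact: field_subvMr.
exact: subv_trans sKC (field_subvMl _ _).
Qed.

Lemma compositum_take_mono Ks k m :
  (k <= m)%N -> (compositum (take k Ks) <= compositum (take m Ks))%VS.
Proof.
move=> le_km; rewrite -(cat_take_drop k (take m Ks)) take_takel //.
by rewrite !compositumE big_cat /= -!compositumE field_subvMr.
Qed.

Variable Ls : seq {subfield E}.

Lemma nth_tower k :
  (k <= size Ls)%N -> nth 0%VS (tower Ls) k = compositum (take k Ls).
Proof.
move=> le_k; rewrite (nth_map 0%N) ?size_iota ?ltnS // nth_iota ?ltnS //.
by rewrite add0n compositumE.
Qed.

Lemma uniq_tower_nth_notsub j : uniq (tower Ls) -> (j < size Ls)%N ->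
  ~~ (nth 1%AS Ls j <= compositum (take j Ls))%VS.
Proof.
move=> uniq_tower lt_j; apply: contraTN uniq_tower => sLjC.
have size_tower : size (tower Ls) = (size Ls).+1 by rewrite size_map size_iota.
have eq_tower : nth 0%VS (tower Ls) j.+1 = nth 0%VS (tower Ls) j.
  rewrite (nth_tower lt_j) (nth_tower (ltnW lt_j)) (take_nth 1%AS lt_j).
  rewrite compositum_rcons; apply/eqP.
  by rewrite eqEsubv prodv_sub ?subvv ?field_subvMr.
apply/negP => /(nth_uniq 0%VS) => /(_ j.+1 j); rewrite size_tower !ltnS.
by rewrite eq_tower eqxx (gtn_eqF (ltnSn j)) => /(_ lt_j (ltnW lt_j)).
Qed.

Lemma nth_sub_compositum j k : uniq (tower Ls) -> (j < size Ls)%N ->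
  (nth 1%AS Ls j <= compositum (take k Ls))%VS = (j < k)%N.
Proof.
move=> uniq_tower lt_j; apply/idP/idP => [sLjC | lt_jk].
  rewrite ltnNge; apply: contraNN (uniq_tower_nth_notsub uniq_tower lt_j).
  by move/(compositum_take_mono Ls); apply: subv_trans.
apply/sub_compositum; rewrite -(nth_take 1%AS lt_jk) mem_nth //.
by rewrite size_take_min leq_min lt_jk.
Qed.

End Composita.

Lemma gal_intermediate_inj (F : fieldType) (E : splittingFieldType F)
    (K M1 M2 Lt : {subfield E}) :
    galois K Lt -> (K <= M1 <= Lt)%VS -> (K <= M2 <= Lt)%VS ->
  'Gal(Lt / M1)%g = 'Gal(Lt / M2)%g -> M1 = M2.
Proof.
move=> galKLt sKM1Lt sKM2Lt eq_gal; apply: val_inj => /=.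
have /galois_fixedField <- := galoisS sKM1Lt galKLt.
by have /galois_fixedField <- := galoisS sKM2Lt galKLt; rewrite eq_gal.
Qed.

Section GalOf.

Variables (F : fieldType) (E : splittingFieldType F) (Lt : {subfield E}).

Lemma mem_gal1 (g : gal_of Lt) : g \in 'Gal(Lt / 1%VS)%g.
Proof. by rewrite gal_kHom ?sub1v ?k1AHom. Qed.

Lemma dim_gal_img (g : gal_of Lt) (V : {vspace E}) : \dim (g @: V) = \dim V.
Proof. by rewrite limg_dim_eq // (eqP (AEnd_lker0 _)) capv0. Qed.

Lemma galKV (g : gal_of Lt) z : z \in Lt -> (g^-1)%g (g z) = z.
Proof. by move=> Ltz; rewrite -galM // mulgV gal_id. Qed.

Lemma galVK (g : gal_of Lt) z : z \in Lt -> g ((g^-1)%g z) = z.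
Proof. by move=> Ltz; rewrite -galM ?memv_gal // mulVg gal_id. Qed.

End GalOf.

Section GaloisOrbit.

Variables (F : fieldType) (E : splittingFieldType F) (L Lt : {subfield E}) (x : E).
Hypotheses (defL : <<1%VS; x>>%VS = L) (sLLt : (L <= Lt)%VS) (galLt : galois 1%VS Lt).

Local Notation G := 'Gal(Lt / 1%VS)%G.
Local Notation H := 'Gal(Lt / L)%G.

Let xLt : x \in Lt. Proof. by rewrite (subvP sLLt) // -defL memv_adjoin. Qed.

Lemma gal_img_gen (g : gal_of Lt) : (g @: L)%VS = <<1%VS; g x>>%VS.
Proof. by rewrite -defL aimg_adjoin aimg1. Qed.

Lemma adjoin_gal_eq (g : gal_of Lt) (V : {subfield E}) :
  (\dim V <= \dim L)%N -> (<<1%VS; g x>>%VS == V) = (g x \in V).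
Proof.
move=> leVL; apply/eqP/idP => [<- | gxV]; first exact: memv_adjoin.
apply/eqP; rewrite eqEdim -gal_img_gen dim_gal_img leVL andbT gal_img_gen.
by apply/FadjoinP; rewrite sub1v.
Qed.

Lemma gal_stab_gen (k : gal_of Lt) : (k \in H) = (k x == x).
Proof.
rewrite -sub1set galois_connection // -defL.
apply/FadjoinP/eqP => [[_ /fixedFieldP] | kx]; first by move/(_ xLt k (set11 k)).
by split; [exact: sub1v | apply/fixedFieldP => // k'; rewrite inE => /eqP ->].
Qed.

(* H :^ h = 'Gal(Lt / h @: L), and M |-> 'Gal(Lt / M) is injective on intermediate fields. *)
Lemma gal_norm_gen (h : gal_of Lt) : (h \in 'N_G(H))%g = (h x \in L).
Proof.
rewrite inE mem_gal1 -adjoin_gal_eq // -gal_img_gen.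
apply/normP/eqP => [nHh | eq_hL]; last by rewrite gal_conjg eq_hL.
rewrite gal_img_gen; suff <- : <<1%VS; h x>>%AS = L by [].
apply: (gal_intermediate_inj galLt); rewrite ?sub1v ?sLLt //=.
- by apply/FadjoinP; rewrite sub1v memv_gal.
- by rewrite -gal_img_gen -gal_conjg.
Qed.

Lemma gal_fiber (h0 : gal_of Lt) : [set h : gal_of Lt | h x == h0 x] = (H :* h0)%g.
Proof.
apply/setP => h; rewrite inE mem_rcoset gal_stab_gen galM //.
apply/eqP/eqP => [-> | eq_x]; first exact: galKV.
by rewrite -[h x](galVK h0) ?memv_gal // eq_x.
Qed.

Lemma gal_conj_fiber (g : gal_of Lt) :
  [set h : gal_of Lt | h x \in (g @: L)%VS] = ('N_G(H) :* g)%g.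
Proof.
apply/setP => h; rewrite inE mem_rcoset gal_norm_gen galM //.
apply/idP/idP => [/memv_imgP[w Lw ->] | Lgh]; first by rewrite galKV ?(subvP sLLt).
by rewrite -[h x](galVK g) ?memv_gal // memv_img.
Qed.

Definition gal_orbit := undup (codom (fun h : gal_of Lt => h x)).

Lemma gal_orbitP y : reflect (exists h : gal_of Lt, y = h x) (y \in gal_orbit).
Proof. by rewrite mem_undup; apply: codomP. Qed.

Lemma mem_gal_orbit y : (y \in gal_orbit) = root (minPoly 1%VS x) y.
Proof.
apply/gal_orbitP/idP => [[h ->] | root_y].
  exact: root_minPoly_gal (sub1v _) (mem_gal1 h) xLt.
have normLt : normalField 1%VS Lt by case/and3P: galLt.
by have [h _ <-] := normalField_root_minPoly (sub1v _) normLt xLt root_y; exists h.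
Qed.

Lemma count_gal_orbit (P : pred E) :
  (count P gal_orbit * #|H| = #|[set h : gal_of Lt | P (h x)]|)%N.
Proof.
rewrite count_undup_uniform ?count_codom // => _ /codomP[h0 ->].
by rewrite count_codom -[RHS](card_rcoset _ h0) -gal_fiber.
Qed.

Lemma count_gal_orbit_img (g : gal_of Lt) :
  count (fun y => y \in (g @: L)%VS) gal_orbit = r_K L Lt.
Proof.
have sHN : (H \subset 'N_G(H))%g.
  by rewrite subsetI normG andbT; apply/subsetP => h _; apply: mem_gal1.
apply/eqP; rewrite -(eqn_pmul2r (cardG_gt0 H)) count_gal_orbit gal_conj_fiber.
by rewrite card_rcoset /r_K -(Lagrange sHN) mulnC.
Qed.

Lemma K_conjugate_gal_img (L' : {subfield E}) :
  K_conjugate L L' -> exists g : gal_of Lt, (L' : {vspace E}) = (g @: L)%VS.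
Proof.
case=> f [homLf <-].
have normLt : normalField 1%VS Lt by case/and3P: galLt.
have sKLLt : (1 <= L <= Lt)%VS by rewrite sub1v sLLt.
have [g _ eq_fg] := kHom_to_gal sKLLt normLt homLf.
by exists g; apply: eq_in_limg.
Qed.

Lemma gal_orbit_K_conjugate y : y \in gal_orbit -> K_conjugate L <<1%VS; y>>%AS.
Proof.
by case/gal_orbitP => h ->; exists (gal_repr h); rewrite k1AHom gal_img_gen.
Qed.

Lemma gal_orbit_gen (g : gal_of Lt) y :
  y \in gal_orbit -> y \in (g @: L)%VS -> (g @: L)%VS = <<1%VS; y>>%VS.
Proof.
case/gal_orbitP => h ->; rewrite !gal_img_gen => gLhx.
apply/esym/eqP; rewrite (adjoin_gal_eq h (V := <<1%VS; g x>>%AS)) //=.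
by rewrite -gal_img_gen dim_gal_img.
Qed.

Variable Ls : seq {subfield E}.
Hypotheses (uniq_Ls : uniq Ls) (conj_Ls : forall L', L' \in Ls <-> K_conjugate L L').
Hypothesis uniq_tower : uniq (tower Ls).

Local Notation gen_index y := (index <<1%VS; y>>%AS Ls).

Lemma gal_orbit_gen_in_Ls y : y \in gal_orbit -> <<1%VS; y>>%AS \in Ls.
Proof. by move=> ry; apply/conj_Ls; apply: gal_orbit_K_conjugate ry. Qed.

Lemma mem_compositum_gal_orbit k y :
  y \in gal_orbit -> (y \in compositum (take k Ls)) = (gen_index y < k)%N.
Proof.
move=> ry; have Ls_y := gal_orbit_gen_in_Ls ry.
rewrite -(nth_sub_compositum k uniq_tower) ?index_mem // nth_index //.
by apply/idP/FadjoinP => [Cy | [] //]; rewrite sub1v.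
Qed.

Lemma count_gal_orbit_gen_index j :
  (j < size Ls)%N -> count (fun y => gen_index y == j) gal_orbit = r_K L Lt.
Proof.
move=> lt_j; have /(conj_Ls _).1 := mem_nth 1%AS lt_j.
case/K_conjugate_gal_img => g eq_Lj.
rewrite -(count_gal_orbit_img g); apply: eq_in_count => y ry /=.
apply/eqP/idP => [idx_y | gLy].
  by rewrite -eq_Lj -idx_y nth_index ?memv_adjoin ?gal_orbit_gen_in_Ls.
have eq_gen : nth 1%AS Ls j = <<1%VS; y>>%AS.
  by apply: val_inj; exact: etrans eq_Lj (gal_orbit_gen ry gLy).
by rewrite -eq_gen index_uniq.
Qed.

Lemma count_gal_orbit_compositum k : (k <= size Ls)%N ->
  count (fun y => y \in compositum (take k Ls)) gal_orbit = (k * r_K L Lt)%N.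
Proof.
rewrite (eq_in_count (a2 := fun y => gen_index y < k)%N) => [|y].
  2: exact: mem_compositum_gal_orbit.
elim: k => [|k IH] le_k; first by rewrite (eq_count (a2 := pred0)) ?count_pred0.
by rewrite count_ltnS IH 1?ltnW // count_gal_orbit_gen_index // mulSn addnC.
Qed.

End GaloisOrbit.

Theorem mainTheorem18 (F : fieldType) (E : splittingFieldType F)
    (L Lt : {subfield E}) (x : E) (Ls : seq {subfield E}) :
  perfect_field F ->
  <<1%VS; x>>%VS = L ->
  galois_closure_of L Lt ->
  uniq Ls ->
  (forall L' : {subfield E}, L' \in Ls <-> K_conjugate L L') ->
  uniq (tower Ls) ->
  forall a : nat, (a <= size Ls)%N ->
  exists M : {subfield E}, rho_is M x (a * r_K L Lt)%N.
Proof.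
move=> _ defL [sLLt galLt _] uniq_Ls conj_Ls uniq_tower a le_a.
pose M := compositum (take a Ls).
exists M, [seq y <- gal_orbit Lt x | y \in M]; split.
- by rewrite filter_uniq ?undup_uniq.
- by rewrite size_filter
    (count_gal_orbit_compositum defL sLLt galLt uniq_Ls conj_Ls uniq_tower).
- by move=> y; rewrite mem_filter (mem_gal_orbit defL sLLt galLt).
- by move=> y My root_y; rewrite mem_filter My (mem_gal_orbit defL sLLt galLt).
Qed.
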